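(* Every tiling system is sofic; that is, for every finite collection $\mathcal P$ of prototiles, $\sigma:T(\mathcal P)\to T(\mathcal P)$ is a sofic system.
   Context: A prototile is a finite nonempty subset of $\mathbb Z$ with minimum $0$. For a finite collection $\mathcal P=\{P_1,\dots,P_K\}$ of prototiles, a tiling of $\mathbb Z$ by $\mathcal P$ is an expression $\mathbb Z=\bigcup_j(t_j+P_{k_j})$ as a disjoint union of translates of prototiles; it corresponds to the point $x\in\{1,\dots,K\}^{\mathbb Z}$ with $x_i=k$ iff $i\in t_j+P_{k_j}$ for some $j$ with $k_j=k$. $T(\mathcal P)$ is the set of all such points and $\sigma$ is the shift $(\sigma x)_i=x_{i+1}$; $\sigma:T(\mathcal P)\to T(\mathcal P)$ is called a tiling system. *)

From Stdlib Require Import ZArith List.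
Import ListNotations.
Open Scope Z_scope.

(* A prototile: a finite nonempty subset of Z with minimum 0, given by a list
   of its elements. *)
Definition prototile (P : list Z) : Prop :=
  In 0 P /\ forall p, In p P -> 0 <= p.

(* The k-th prototile of the collection, k = 1..K (1-based as in the paper). *)
Definition tile (PP : list (list Z)) (k : nat) : list Z := nth (k - 1) PP [].

(* A tiling of Z by PP: a set S of placements (t,k) (translate t + P_k) such
   that every integer lies in exactly one placed tile (disjoint union
   covering Z). *)
Definition is_tiling (PP : list (list Z)) (S : Z -> nat -> Prop) : Prop :=
  (forall t k, S t k -> (1 <= k <= length PP)%nat) /\
  (forall i : Z, exists t k, S t k /\ In (i - t) (tile PP k) /\
     forall t' k', S t' k' -> In (i - t') (tile PP k') -> t' = t /\ k' = k).

Definition tiling_point (PP : list (list Z)) (S : Z -> nat -> Prop)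
  (x : Z -> nat) : Prop :=
  forall i t k, S t k -> In (i - t) (tile PP k) -> x i = k.

Definition tiling_space (PP : list (list Z)) (x : Z -> nat) : Prop :=
  exists S, is_tiling PP S /\ tiling_point PP S x.

(* Sofic shift (Lind–Marcus): the set of label sequences of bi-infinite
   walks in a finite labeled directed graph.  The graph is a finite list of
   labeled edges (source, target, label). *)
Definition edge_src (e : nat * nat * nat) : nat := fst (fst e).
Definition edge_tgt (e : nat * nat * nat) : nat := snd (fst e).
Definition edge_lab (e : nat * nat * nat) : nat := snd e.

Definition sofic (X : (Z -> nat) -> Prop) : Prop :=
  exists E : list (nat * nat * nat),
    forall x : Z -> nat,
      X x <->
      exists w : Z -> nat * nat * nat,
        (forall i, In (w i) E) /\
        (forall i, edge_tgt (w i) = edge_src (w (i + 1))) /\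
        (forall i, x i = edge_lab (w i)).

(* A tiling is determined by its marker sequence m : Z -> {0, ..., K}, where m t = k <> 0
   iff a copy of P_k is placed at t.  Every prototile lies in [0, D], so whether i is
   covered by exactly one placed tile, and by which one, depends only on the window
   m i, m (i - 1), ..., m (i - D).  Hence T(P) is the set of label sequences of
   bi-infinite walks in the finite graph whose vertices are the windows over
   {0, ..., K}, with an edge from each window to each of its one-step shifts, labelled
   by the type of the tile the source window places over its current site. *)

From Stdlib Require Import ZArith List Lia ClassicalEpsilon
  FunctionalExtensionality PropExtensionality.
Import ListNotations.
Open Scope Z_scope.

Lemma sofic_ext (X Y : (Z -> nat) -> Prop) :
  (forall x, X x <-> Y x) -> sofic Y -> sofic X.
Proof.
  intros HXY [E HE]. exists E. intro x. rewrite HXY. apply HE.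
Qed.

Lemma exists_filter {B : Type} (P : B -> Prop) (l : list B) :
  exists l', forall y, In y l' <-> In y l /\ P y.
Proof.
  induction l as [|a l [l' Hl']].
  - exists []. simpl. tauto.
  - destruct (classic (P a)) as [Ha|Ha]; [exists (a :: l') | exists l'];
      intro y; simpl; rewrite Hl'; intuition congruence.
Qed.

Lemma sofic_of_graph {A : Type} (V : list A) (R : A -> A -> nat -> Prop) (lmax : nat) :
  (forall a b l, In a V -> R a b l -> (l <= lmax)%nat) ->
  sofic (fun x => exists s : Z -> A,
    (forall i, In (s i) V) /\ forall i, R (s i) (s (i + 1)) (x i)).
Proof.
  intros Hlab. destruct V as [|d V0].
  { exists []. intro x. split; intros [s [Hs _]]; destruct (Hs 0). }
  set (V := d :: V0). set (vertex j := nth j V d).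
  destruct (exists_filter
    (fun e => R (vertex (edge_src e)) (vertex (edge_tgt e)) (edge_lab e))
    (list_prod (list_prod (seq 0 (length V)) (seq 0 (length V))) (seq 0 (S lmax))))
    as [E HE].
  exists E. intro x. split.
  - intros [s [HV HR]].
    destruct (choice (fun i j => (j < length V)%nat /\ vertex j = s i)) as [idx Hidx].
    { intro i. exact (In_nth V (s i) d (HV i)). }
    exists (fun i => (idx i, idx (i + 1), x i)). repeat split; [|reflexivity..].
    intro i. apply HE.
    destruct (Hidx i) as [Hi Hs], (Hidx (i + 1)) as [Hi' Hs']. split.
    + rewrite !in_prod_iff, !in_seq. pose proof (Hlab _ _ _ (HV i) (HR i)). lia.
    + unfold edge_src, edge_tgt, edge_lab; simpl. rewrite Hs, Hs'. apply HR.
  - intros [w [Hw [Hchain Hx]]].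
    exists (fun i => vertex (edge_src (w i))). split.
    + intro i. apply nth_In. destruct (proj1 (HE _) (Hw i)) as [Hin _].
      destruct (w i) as [[a b] l]. rewrite !in_prod_iff, !in_seq in Hin.
      unfold edge_src. cbn [fst]. lia.
    + intro i. rewrite Hx, <- Hchain. apply (proj1 (HE _) (Hw i)).
Qed.

Fixpoint words (kmax n : nat) : list (list nat) :=
  match n with
  | O => [[]]
  | S n => flat_map (fun a => map (fun v => v :: a) (seq 0 (S kmax))) (words kmax n)
  end.

Lemma In_words kmax n a :
  In a (words kmax n) <-> length a = n /\ Forall (fun v => (v <= kmax)%nat) a.
Proof.
  revert a; induction n as [|n IH]; intros [|v a]; cbn [words].
  - simpl. intuition.
  - simpl. split; [intros [H|[]]; discriminate | intros [H _]; discriminate].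
  - rewrite in_flat_map. split; [|intros [H _]; discriminate].
    intros [b [_ Hb]]. apply in_map_iff in Hb as [v [H _]]. discriminate.
  - rewrite in_flat_map. split.
    + intros [b [Hb Hv]]. apply in_map_iff in Hv as [v' [Heq Hv']].
      injection Heq as <- <-. apply IH in Hb as [Hl Hf]. rewrite in_seq in Hv'.
      split; [simpl; lia|]. constructor; [lia|exact Hf].
    + intros [Hl Hf]. simpl in Hl. inversion Hf; subst. exists a. split.
      * apply IH. split; [lia|assumption].
      * apply (in_map (fun w => w :: a)), in_seq. lia.
Qed.

Definition window (m : Z -> nat) (n : nat) (i : Z) : list nat :=
  map (fun o => m (i - Z.of_nat o)) (seq 0 n).

Lemma length_window m n i : length (window m n i) = n.
Proof. unfold window. rewrite length_map, length_seq. reflexivity. Qed.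

Lemma nth_window m n i o :
  (o < n)%nat -> nth o (window m n i) 0%nat = m (i - Z.of_nat o).
Proof.
  intros Ho. unfold window.
  rewrite nth_indep with (d' := m (i - Z.of_nat 0)) by (rewrite length_map, length_seq; lia).
  rewrite (map_nth (fun o => m (i - Z.of_nat o))), seq_nth by lia. reflexivity.
Qed.

Lemma window_succ m n i : window m (S n) (i + 1) = m (i + 1) :: window m n i.
Proof.
  unfold window. cbn [seq map]. rewrite <- seq_shift, map_map. f_equal.
  - f_equal. lia.
  - apply map_ext. intro o. f_equal. lia.
Qed.

Lemma firstn_window m n i : firstn n (window m (S n) i) = window m n i.
Proof.
  unfold window. rewrite firstn_map, seq_S, firstn_app, length_seq, Nat.sub_diag,
    firstn_all2 by (rewrite length_seq; lia).
  rewrite app_nil_r. reflexivity.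
Qed.

Lemma window_of_shift_consistent (n : nat) (s : Z -> list nat) :
  (forall i, length (s i) = S n) ->
  (forall i, tl (s (i + 1)) = firstn n (s i)) ->
  forall i, s i = window (fun t => hd 0%nat (s t)) (S n) i.
Proof.
  intros Hlen Hshift i.
  apply nth_ext with (d := 0%nat) (d' := 0%nat); [rewrite length_window; apply Hlen|].
  intros o Ho. rewrite Hlen in Ho. rewrite nth_window by exact Ho.
  revert i; induction o as [|o IH]; intro i.
  - rewrite Z.sub_0_r. destruct (s i); reflexivity.
  - replace (i - Z.of_nat (S o)) with (i - 1 - Z.of_nat o) by lia.
    rewrite <- IH by lia.
    replace i with (i - 1 + 1) at 1 by lia.
    assert (Htl : forall l : list nat, nth (S o) l 0%nat = nth o (tl l) 0%nat)
      by (intros [|v l]; [destruct o|]; reflexivity).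
    rewrite Htl, Hshift, nth_firstn.
    destruct (Nat.ltb_spec o n); [reflexivity | lia].
Qed.

Lemma sofic_of_local_rule (kmax n : nat) (Q : list nat -> nat -> Prop) :
  (forall a l, Q a l -> In l a) ->
  sofic (fun x => exists m : Z -> nat,
    (forall t, (m t <= kmax)%nat) /\ forall i, Q (window m (S n) i) (x i)).
Proof.
  intros HQ.
  apply (sofic_ext _ (fun x => exists s : Z -> list nat,
    (forall i, In (s i) (words kmax (S n))) /\
    forall i, Q (s i) (x i) /\ tl (s (i + 1)) = firstn n (s i))).
  2: { apply (sofic_of_graph _ (fun a b l => Q a l /\ tl b = firstn n a) kmax).
       intros a b l Ha [Hl _]. apply In_words in Ha as [_ Ha].
       rewrite Forall_forall in Ha. apply Ha, HQ, Hl. }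
  intro x. split.
  - intros [m [Hm HmQ]]. exists (window m (S n)). split.
    + intro i. apply In_words. split; [apply length_window|].
      apply Forall_forall. intros v Hv. unfold window in Hv.
      apply in_map_iff in Hv as [o [<- _]]. apply Hm.
    + intro i. rewrite window_succ, firstn_window. auto.
  - intros [s [Hs Hsh]].
    assert (Hlen : forall i, length (s i) = S n) by (intro i; apply (In_words kmax), Hs).
    pose proof (window_of_shift_consistent n s Hlen (fun i => proj2 (Hsh i))) as Hwin.
    exists (fun t => hd 0%nat (s t)). split.
    + intro t. specialize (Hs t). apply In_words in Hs as [Hl Hf].
      destruct (s t) as [|v a]; [discriminate|]. inversion Hf. assumption.
    + intro i. rewrite <- Hwin. apply Hsh.
Qed.
Section Tilings.

Variable PP : list (list Z).
Hypothesis HP : forall P, In P PP -> prototile P.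

Definition max_offset : nat := list_max (map Z.to_nat (concat PP)).

Lemma tile_offset_bounds k p : In p (tile PP k) -> 0 <= p <= Z.of_nat max_offset.
Proof.
  unfold tile. intros Hp.
  destruct (Nat.lt_ge_cases (k - 1) (length PP)) as [Hk|Hk];
    [|rewrite nth_overflow in Hp by lia; destruct Hp].
  pose proof (nth_In PP [] Hk) as HPk.
  assert (Hle : (Z.to_nat p <= max_offset)%nat).
  { pose proof (proj1 (list_max_le _ _) (Nat.le_refl max_offset)) as Hmax.
    rewrite Forall_forall in Hmax. apply Hmax, in_map, in_concat. eauto. }
  pose proof (proj2 (HP _ HPk) p Hp). lia.
Qed.

Lemma zero_in_tile k : (1 <= k <= length PP)%nat -> In 0 (tile PP k).
Proof. intros Hk. apply HP, nth_In. lia. Qed.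

Definition covered_once (S : Z -> nat -> Prop) (x : Z -> nat) (i : Z) : Prop :=
  exists t k, S t k /\ In (i - t) (tile PP k) /\ x i = k /\
    forall t' k', S t' k' -> In (i - t') (tile PP k') -> t' = t /\ k' = k.

Lemma is_tiling_point_iff S x :
  is_tiling PP S /\ tiling_point PP S x <->
  (forall t k, S t k -> (1 <= k <= length PP)%nat) /\ forall i, covered_once S x i.
Proof.
  split.
  - intros [[Hk Hcov] Hx]. split; [exact Hk|]. intro i.
    destruct (Hcov i) as [t [k [HS [Hi Hu]]]].
    exists t, k. split; [exact HS|]. split; [exact Hi|]. split; [|exact Hu].
    exact (Hx i t k HS Hi).
  - intros [Hk Hcov]. split; [split; [exact Hk|]|].
    + intro i. destruct (Hcov i) as [t [k [HS [Hi [_ Hu]]]]]. eauto.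
    + intros i t k HS Hi. destruct (Hcov i) as [t0 [k0 [_ [_ [Hx Hu]]]]].
      destruct (Hu t k HS Hi) as [_ ->]. exact Hx.
Qed.

Definition placements (m : Z -> nat) (t : Z) (k : nat) : Prop := k <> 0%nat /\ m t = k.

Lemma tiling_placements S : is_tiling PP S -> exists m, S = placements m.
Proof.
  intros [Hk Hcov].
  destruct (choice (fun t k => S t k \/ (k = 0%nat /\ forall k', ~ S t k'))) as [m Hm].
  { intro t. destruct (classic (exists k, S t k)) as [[k H]|H]; [eauto|].
    exists 0%nat. right. split; [reflexivity|]. intros k' Hk'. eauto. }
  assert (Hfun : forall t k, S t k -> m t = k).
  { intros t k HS. destruct (Hm t) as [HSm | [_ Hno]]; [|exfalso; eapply Hno; eauto].
    destruct (Hcov t) as [t0 [k0 [_ [_ Hu]]]].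
    pose proof (Hu t k HS) as H1. pose proof (Hu t (m t) HSm) as H2.
    rewrite Z.sub_diag in H1, H2.
    destruct (H1 (zero_in_tile k (Hk _ _ HS))), (H2 (zero_in_tile _ (Hk _ _ HSm))).
    congruence. }
  exists m. extensionality t. extensionality k. apply propositional_extensionality.
  split.
  - intro HS. pose proof (Hk _ _ HS). split; [lia|]. apply Hfun, HS.
  - intros [Hk0 <-]. destruct (Hm t) as [HSm|[Hz _]]; [exact HSm|contradiction].
Qed.

Definition covers (a : list nat) (o : nat) : Prop :=
  nth o a 0%nat <> 0%nat /\ In (Z.of_nat o) (tile PP (nth o a 0%nat)).

Definition tile_rule (a : list nat) (l : nat) : Prop :=
  exists o, covers a o /\ nth o a 0%nat = l /\ forall o', covers a o' -> o' = o.

Lemma tile_rule_label a l : tile_rule a l -> In l a.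
Proof.
  intros [o [[Hnz _] [<- _]]]. apply nth_In.
  destruct (Nat.lt_ge_cases o (length a)) as [H|H]; [exact H|].
  rewrite nth_overflow in Hnz by exact H. contradiction.
Qed.

Lemma covers_window m i o :
  covers (window m (S max_offset) i) o <->
  m (i - Z.of_nat o) <> 0%nat /\ In (Z.of_nat o) (tile PP (m (i - Z.of_nat o))).
Proof.
  unfold covers. destruct (Nat.lt_ge_cases o (S max_offset)) as [Ho|Ho].
  - rewrite nth_window by exact Ho. reflexivity.
  - rewrite nth_overflow by (rewrite length_window; exact Ho).
    split; [intros [H _]; contradiction|].
    intros [_ Hin]. apply tile_offset_bounds in Hin. lia.
Qed.

Lemma covered_once_placements m x i :
  covered_once (placements m) x i <-> tile_rule (window m (S max_offset) i) (x i).
Proof.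
  split.
  - intros [t [k [[Hk Hmt] [Hi [Hx Hu]]]]].
    pose proof (tile_offset_bounds _ _ Hi) as Hb.
    exists (Z.to_nat (i - t)).
    assert (Ht : i - Z.of_nat (Z.to_nat (i - t)) = t) by lia.
    rewrite covers_window, nth_window, Ht, Z2Nat.id by lia.
    split; [split; congruence|]. split; [congruence|].
    intros o' [Hnz Hin]%covers_window.
    destruct (Hu (i - Z.of_nat o') (m (i - Z.of_nat o'))) as [Ht' _].
    + split; auto.
    + replace (i - (i - Z.of_nat o')) with (Z.of_nat o') by lia. exact Hin.
    + lia.
  - intros [o [Ho [Hx Hu]]].
    apply covers_window in Ho as Ho'. destruct Ho' as [Hnz Hin].
    pose proof (tile_offset_bounds _ _ Hin) as Hb.
    rewrite nth_window in Hx by lia.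
    exists (i - Z.of_nat o), (m (i - Z.of_nat o)).
    replace (i - (i - Z.of_nat o)) with (Z.of_nat o) by lia.
    split; [split; auto|]. split; [exact Hin|]. split; [auto|].
    intros t' k' [Hk' Hmt'] Hi'.
    pose proof (tile_offset_bounds _ _ Hi') as Hb'.
    assert (Ho' : Z.to_nat (i - t') = o).
    { apply Hu, covers_window.
      replace (i - Z.of_nat (Z.to_nat (i - t'))) with t' by lia.
      rewrite Z2Nat.id by lia. rewrite Hmt'. auto. }
    assert (Ht' : t' = i - Z.of_nat o) by lia.
    subst t'. auto.
Qed.

Lemma tiling_space_iff_local_rule x :
  tiling_space PP x <->
  exists m : Z -> nat, (forall t, (m t <= length PP)%nat) /\
    forall i, tile_rule (window m (S max_offset) i) (x i).
Proof.
  split.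
  - intros [S [HS Hx]]. destruct (tiling_placements S HS) as [m ->].
    destruct (proj1 (is_tiling_point_iff _ x) (conj HS Hx)) as [Hk Hcov].
    exists m. split.
    + intro t. destruct (Nat.eq_dec (m t) 0) as [->|Hnz]; [lia|].
      apply (Hk t (m t)). split; auto.
    + intro i. apply covered_once_placements, Hcov.
  - intros [m [Hm Hrule]]. exists (placements m). apply is_tiling_point_iff. split.
    + intros t k [Hk <-]. specialize (Hm t). lia.
    + intro i. apply covered_once_placements, Hrule.
Qed.

End Tilings.

Theorem mainTheorem4 (PP : list (list Z)) :
  (forall P, In P PP -> prototile P) ->
  sofic (tiling_space PP).
Proof.
  intros HP.
  apply (sofic_ext _ _ (tiling_space_iff_local_rule PP HP)).
  apply sofic_of_local_rule, tile_rule_label.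
Qed.
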